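(* Let $\mathcal{G}_{k-1}=(V,E_{k-1})$ be an unweighted simple directed graph, let $e_k=(u_k,v_k)$ with $u_k\neq v_k$ and $e_k\notin E_{k-1}$ be an edge to be inserted, and let $\mathcal{G}_k=(V,E_{k-1}\cup\{e_k\})$. Let $L_{k-1}$ be a list of $l_{k-1}$ spanning converging forests sampled uniformly from $\mathcal{F}(\mathcal{G}_{k-1})$. Let $L_k$ be the list obtained from $L_{k-1}$ by keeping all forests of $L_{k-1}$ and, in addition, for each $\phi\in L_{k-1}$ with $r_\phi(u_k)=u_k$ and $r_\phi(v_k)\neq u_k$, adding the forest $\phi\cup\{e_k\}$. Then all forests in $\mathcal{F}(\mathcal{G}_k)$ have the same probability of being included in $L_k$; that is, $\mathbb{P}(\phi_1\in L_k)=\mathbb{P}(\phi_2\in L_k)$ for all $\phi_1,\phi_2\in\mathcal{F}(\mathcal{G}_k)$.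
   Context: A rooted converging tree is a weakly connected digraph without cycles in which one node (the root) has out-degree $0$ and every other node has out-degree $1$ (an isolated node is such a tree rooted at itself). A spanning converging forest of a digraph $\mathcal{G}=(V,E)$ is a spanning subgraph (containing all of $V$ and a subset of $E$, identified with its edge set) whose weakly connected components are rooted converging trees. $\mathcal{F}(\mathcal{G})$ denotes the set of all spanning converging forests of $\mathcal{G}$; $r_\phi(i)$ is the root of the tree of $\phi$ containing $i$. ''Sampled uniformly'' means each forest of $\mathcal{F}(\mathcal{G}_{k-1})$ is equally likely to appear in $L_{k-1}$ (e.g. the entries are independent uniform samples from $\mathcal{F}(\mathcal{G}_{k-1})$). The list $L_k$ is the output of the paper's Insert-Update procedure. *)

From HB Require Import structures.
From mathcomp Require Import all_boot all_order all_algebra.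
Set Implicit Arguments. Unset Strict Implicit. Unset Printing Implicit Defensive.
Import Order.TTheory GRing.Theory Num.Theory.

Section Forests.
Variable V : finType.

(* A digraph on V is identified with its edge set; a spanning subgraph with a
   subset of the edge set. *)
Definition edge_rel (phi : {set V * V}) : rel V := fun i j => (i, j) \in phi.

Definition weak_rel (phi : {set V * V}) : rel V :=
  fun i j => ((i, j) \in phi) || ((j, i) \in phi).

Definition wcomp (phi : {set V * V}) (i : V) : {set V} :=
  [set j | connect (weak_rel phi) i j].

Definition outdeg (phi : {set V * V}) (i : V) : nat :=
  #|[set j | (i, j) \in phi]|.

Definition dacyclic (phi : {set V * V}) : bool :=
  [forall x : V, forall y : V, ((x, y) \in phi) ==> ~~ connect (edge_rel phi) y x].

Definition is_scf (E phi : {set V * V}) : bool :=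
  [&& phi \subset E, dacyclic phi,
      [forall i, outdeg phi i <= 1] &
      [forall i, #|[set j in wcomp phi i | outdeg phi j == 0]| == 1]].

Definition root_of (phi : {set V * V}) (i : V) : V :=
  odflt i [pick j in wcomp phi i | outdeg phi j == 0].

Definition insert_update (u v : V) (L : seq {set V * V}) : seq {set V * V} :=
  L ++ [seq phi :|: [set (u, v)] |
          phi <- L & (root_of phi u == u) && (root_of phi v != u)].

End Forests.

Definition prob_in (R : numDomainType) (V : finType) (l : nat)
  (P : {ffun l.-tuple {set V * V} -> R})
  (f : l.-tuple {set V * V} -> seq {set V * V}) (phi : {set V * V}) : R :=
  (\sum_(L : l.-tuple {set V * V} | phi \in f L) P L)%R.

(** A forest [phi] of [E ∪ {e}], [e = (u, v)], appears in the updated list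
    exactly when [phi \ {e}] appears in the old one.  This is clear when
    [e ∉ phi].  When [e ∈ phi], [e] is the unique out-edge of [u], so [u] is
    the root of its tree in [phi \ {e}], while the root of [v] differs from
    [u] because [phi] is acyclic: these are exactly the conditions under which
    Insert-Update adds [(phi \ {e}) ∪ {e} = phi].  Hence
    P(phi ∈ L_k) = P(phi \ {e} ∈ L_(k-1)), and as [phi \ {e}] is a forest of
    [E], the right-hand side does not depend on [phi]. *)
From HB Require Import structures.
From mathcomp Require Import all_boot all_order all_algebra.
Import Order.TTheory GRing.Theory Num.Theory.
Set Implicit Arguments. Unset Strict Implicit.

Section ConvergingForests.
Variable V : finType.
Implicit Types (E phi psi : {set V * V}) (i j r x y z : V).

Lemma outdeg_le1_eq phi z x y :
  outdeg phi z <= 1 -> (z, x) \in phi -> (z, y) \in phi -> x = y.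
Proof. by move=> /card_le1_eqP out1 zx zy; apply: out1; rewrite inE. Qed.

Lemma outdeg0_edgeF phi z x : outdeg phi z == 0 -> ((z, x) \in phi) = false.
Proof.
rewrite /outdeg cards_eq0 => /eqP out0; apply/negP => zx.
by have := in_set0 x; rewrite -out0 inE zx.
Qed.

Lemma connect_from_sink phi r j :
  outdeg phi r == 0 -> connect (edge_rel phi) r j -> j = r.
Proof.
move=> r0 /connectP [[|w p] //= /andP [rw _] _].
by rewrite /edge_rel outdeg0_edgeF in rw.
Qed.

Lemma connect_edge_weak phi x y :
  connect (edge_rel phi) x y -> connect (weak_rel phi) x y.
Proof.
by apply: connect_sub => a b ab; apply: connect1; rewrite /weak_rel -/(edge_rel phi a b) ab.
Qed.

Lemma connect_weak_sym phi : connect_sym (weak_rel phi).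
Proof. by apply: sym_connect_sym => a b; rewrite /weak_rel orbC. Qed.

(* Along a weak path ending at a sink, a backward step [(z, x)] is the unique
   out-edge of [z], hence the first edge of the directed path from [z]. *)
Lemma connect_weak_to_sink phi x r :
  (forall i, outdeg phi i <= 1) -> outdeg phi r == 0 ->
  connect (weak_rel phi) x r -> connect (edge_rel phi) x r.
Proof.
move=> out1 + /connectP [p wp def_r]; rewrite {r}def_r.
elim: p x wp => [|z p IHp] x //=.
case/andP=> /orP [xz | zx] wp r0; have := IHp z wp r0.
  exact: connect_trans (connect1 _).
case/connectP=> [[|w q] /=].
  by move=> _ lastz; rewrite lastz in r0; rewrite outdeg0_edgeF in zx.
case/andP=> zw wq lastq; have wx := outdeg_le1_eq (out1 z) zw zx.
by apply/connectP; exists q; rewrite -wx.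
Qed.

(* Induction on the number of nodes reachable from [x]: by acyclicity, those
   reachable from a successor of [x] miss [x]. *)
Lemma dacyclic_sink phi x :
  dacyclic phi -> exists2 r, connect (edge_rel phi) x r & outdeg phi r == 0.
Proof.
move=> acyc; pose reach y := [set w | connect (edge_rel phi) y w].
have [n] := ubnP #|reach x|; elim: n x => // n IHn x; rewrite ltnS => size_x.
have [x0 | xout] := eqVneq (outdeg phi x) 0; first by exists x; rewrite ?connect0 ?x0.
have [y xy] : exists y, (x, y) \in phi.
  by move: xout; rewrite /outdeg cards_eq0 => /set0Pn [y]; rewrite inE; exists y.
have [r yr r0] : exists2 r, connect (edge_rel phi) y r & outdeg phi r == 0.
  apply: IHn; apply: leq_trans size_x; apply: proper_card.
  apply/properP; split.
    by apply/subsetP=> w; rewrite !inE; apply: connect_trans (connect1 _).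
  exists x; first by rewrite inE connect0.
  by rewrite inE; move/forallP/(_ x)/forallP/(_ y)/implyP: acyc; apply.
by exists r => //; apply: connect_trans (connect1 _) yr.
Qed.

Lemma is_scfP E phi :
  reflect [/\ phi \subset E, dacyclic phi & forall i, outdeg phi i <= 1]
          (is_scf E phi).
Proof.
apply: (iffP and4P) => [[sub acyc /forallP out1 _] // | [sub acyc out1]].
split=> //; first exact/forallP.
apply/forallP=> i; apply/cards1P; have [r ir r0] := dacyclic_sink i acyc.
exists r; apply/setP=> j; rewrite !inE; apply/idP/idP => [/andP [ij j0] | /eqP ->].
  have rj : connect (weak_rel phi) r j.
    by apply: connect_trans ij; rewrite connect_weak_sym connect_edge_weak.
  by rewrite (connect_from_sink r0 (connect_weak_to_sink out1 j0 rj)).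
by rewrite r0 andbT connect_edge_weak.
Qed.

Lemma root_of_sink E phi i r :
  is_scf E phi -> outdeg phi r == 0 -> r \in wcomp phi i -> root_of phi i = r.
Proof.
case/and4P=> _ _ _ /forallP /(_ i) /cards1P [s roots] r0 ir.
have root_eq w : (w \in wcomp phi i) && (outdeg phi w == 0) -> w = s.
  by move=> w_root; apply/set1P; rewrite -roots inE.
rewrite /root_of; case: pickP => [w /root_eq -> | none] /=.
  by rewrite (root_eq r) // ir r0.
by move: (none r); rewrite ir r0.
Qed.

Lemma dacyclic_sub phi psi : psi \subset phi -> dacyclic phi -> dacyclic psi.
Proof.
move=> sub /forallP acyc; apply/forallP=> x; apply/forallP=> y; apply/implyP=> xy.
move/forallP/(_ y)/implyP/(_ (subsetP sub _ xy)): (acyc x); apply: contra.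
by apply: connect_sub => a b ab; apply: connect1; apply: (subsetP sub).
Qed.

Lemma outdeg_sub phi psi i : psi \subset phi -> outdeg psi i <= outdeg phi i.
Proof.
by move=> sub; apply/subset_leq_card/subsetP=> j; rewrite !inE; apply: (subsetP sub).
Qed.

Lemma is_scf_sub E E' phi psi :
  is_scf E' phi -> psi \subset phi -> psi \subset E -> is_scf E psi.
Proof.
case/is_scfP=> _ acyc out1 sub subE; apply/is_scfP; split=> //.
  exact: dacyclic_sub acyc.
by move=> i; apply: leq_trans (outdeg_sub i sub) (out1 i).
Qed.

Lemma is_scf_setD1 E phi e : is_scf (E :|: [set e]) phi -> is_scf E (phi :\ e).
Proof.
move=> scf; apply: is_scf_sub (scf) (subsetDl _ _) _.
case/is_scfP: scf => sub _ _; apply/subsetP=> x; rewrite !inE => /andP [xe x_phi].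
by move: (subsetP sub _ x_phi); rewrite !inE (negbTE xe) orbF.
Qed.

Lemma root_of_setD1_edge E phi u v :
  is_scf E phi -> (u, v) \in phi ->
  (root_of (phi :\ (u, v)) u == u) && (root_of (phi :\ (u, v)) v != u).
Proof.
move=> scf uv; set cut := phi :\ (u, v).
have scf_cut : is_scf cut cut by apply: is_scf_sub scf (subsetDl _ _) (subxx _).
case/is_scfP: (scf) => _ acyc out1; case/is_scfP: (scf_cut) => _ acyc_cut _.
have u0 : outdeg cut u == 0.
  rewrite /outdeg cards_eq0; apply/eqP/setP=> w; rewrite !inE.
  by apply/negP=> /andP [wv uw]; rewrite (outdeg_le1_eq (out1 u) uw uv) eqxx in wv.
rewrite (root_of_sink scf_cut u0) ?inE ?connect0 //=.
have [r vr r0] := dacyclic_sink v acyc_cut.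
rewrite (root_of_sink scf_cut r0) ?inE ?connect_edge_weak // eqxx /=.
apply: contraTneq vr => ->; apply/negP => vu.
move/forallP/(_ u)/forallP/(_ v)/implyP/(_ uv)/negP: acyc; apply.
by apply: connect_sub vu => a b; rewrite /edge_rel inE => /andP [_ ab]; apply: connect1.
Qed.

Lemma mem_insert_update E u v phi (L : seq {set V * V}) :
  is_scf E phi -> (forall psi, psi \in L -> (u, v) \notin psi) ->
  (phi \in insert_update u v L) = (phi :\ (u, v) \in L).
Proof.
move=> scf uv_notin; rewrite /insert_update mem_cat.
have [uv | uv] := boolP ((u, v) \in phi); last first.
  have /setDidPl -> : [disjoint phi & [set (u, v)]] by rewrite disjoint_sym disjoints1.
  case: mapP => [[psi _ def_phi] | _]; last by rewrite orbF.
  by rewrite def_phi !inE eqxx orbT in uv.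
have -> : (phi \in L) = false by apply: contraTF uv => /uv_notin.
apply/mapP/idP => [[psi] | cut_in].
  by rewrite mem_filter => /andP [_ psi_in] ->; rewrite setUC setU1K ?uv_notin.
exists (phi :\ (u, v)); last by rewrite setUC setD1K.
by rewrite mem_filter cut_in andbT (root_of_setD1_edge scf uv).
Qed.

End ConvergingForests.

Local Open Scope ring_scope.

Lemma eq_prob_in (R : numDomainType) (V : finType) (l : nat)
  (P : {ffun l.-tuple {set V * V} -> R})
  (f g : l.-tuple {set V * V} -> seq {set V * V}) (phi psi : {set V * V}) :
  (forall L, P L != 0 -> (phi \in f L) = (psi \in g L)) ->
  prob_in P f phi = prob_in P g psi.
Proof.
move=> same; rewrite /prob_in [LHS]big_mkcond [RHS]big_mkcond.
by apply: eq_bigr => L _; have [-> | /same ->] := eqVneq (P L) 0; rewrite ?if_same.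
Qed.

Theorem theorem5p2 (R : realFieldType) (V : finType)
  (E : {set V * V}) (u v : V) (l : nat)
  (P : {ffun l.-tuple {set V * V} -> R}) :
  (forall x : V, (x, x) \notin E) ->
  u != v -> (u, v) \notin E ->
  (forall L, 0 <= P L) ->
  \sum_(L : l.-tuple {set V * V}) P L = 1 ->
  (forall L, P L != 0 -> all (is_scf E) L) ->
  (forall phi1 phi2, is_scf E phi1 -> is_scf E phi2 ->
     prob_in P (fun L => val L) phi1 = prob_in P (fun L => val L) phi2) ->
  forall phi1 phi2,
    is_scf (E :|: [set (u, v)]) phi1 -> is_scf (E :|: [set (u, v)]) phi2 ->
    prob_in P (fun L => insert_update u v (val L)) phi1
    = prob_in P (fun L => insert_update u v (val L)) phi2.
Proof.
move=> _ _ uv_notin_E _ _ supp_scf uniform phi1 phi2 scf1 scf2.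
have prob_update phi : is_scf (E :|: [set (u, v)]) phi ->
    prob_in P (fun L => insert_update u v (val L)) phi
    = prob_in P (fun L => val L) (phi :\ (u, v)).
  move=> scf; apply: eq_prob_in => L /supp_scf /allP all_scf.
  apply: mem_insert_update scf _ => psi /all_scf /is_scfP [sub _ _].
  by apply: contra uv_notin_E; apply: (subsetP sub).
by rewrite !prob_update //; apply: uniform; apply: is_scf_setD1.
Qed.
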